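(* Let $n\ge 2$, let $\Omega$ be a compact subset of $\mathbb{R}^n$, let $\widetilde\Omega=\mathrm{conv}(\Omega)$, and let $v\in S^{n-1}$. Put $\widetilde\Omega^+_{v,b}=\widetilde\Omega\cap\{x\in\mathbb{R}^n : x\cdot v>b\}$. Then for every $z\in \widetilde\Omega^+_{v,l_\Omega(v)}$, the closed segment $\overline{zz'}$ with $z'=\mathrm{R}_{v,l_\Omega(v)}(z)$ is contained in $\widetilde\Omega$.
   Context: $\mathrm{conv}(\Omega)$ is the convex hull of $\Omega$; $S^{n-1}$ is the unit sphere in $\mathbb{R}^n$. For $X\subset\mathbb{R}^n$, $v\in S^{n-1}$ and $b\in\mathbb{R}$, put $X^+_{v,b}=X\cap\{x\in\mathbb{R}^n : x\cdot v>b\}$, and let $\mathrm{R}_{v,b}$ be the reflection of $\mathbb{R}^n$ in the hyperplane $\{x : x\cdot v=b\}$. For a bounded $X\subset\mathbb{R}^n$, $l_X(v)=\inf\{a : \mathrm{R}_{v,c}(X^+_{v,c})\subset X \text{ for every } c\ge a\}$. $\overline{xy}$ denotes the closed line segment joining $x$ and $y$. *)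

From HB Require Import structures.
From mathcomp Require Import all_boot all_order all_algebra.
From mathcomp Require Import all_classical all_reals all_analysis.
Set Implicit Arguments. Unset Strict Implicit. Unset Printing Implicit Defensive.
Import Order.TTheory GRing.Theory Num.Theory.
Import numFieldNormedType.Exports.
Local Open Scope classical_set_scope.
Local Open Scope ring_scope.

Section Defs.
Variables (R : realType) (n : nat).
Notation V := 'rV[R]_n.

Definition dotp (x v : V) : R := \sum_(i < n) x 0 i * v 0 i.

Definition unit_sphere : set V := [set v | dotp v v = 1].

Definition is_convex_set (C : set V) : Prop :=
  forall x y t, C x -> C y -> 0 <= t -> t <= 1 -> C (t *: x + (1 - t) *: y).
Definition convex_hull (X : set V) : set V :=
  [set x | forall C, is_convex_set C -> X `<=` C -> C x].

Definition halfplus (X : set V) (v : V) (b : R) : set V :=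
  X `&` [set x | dotp x v > b].

(* reflection in the hyperplane {x | x . v = b}, v a unit vector *)
Definition refl (v : V) (b : R) (x : V) : V := x - (2 * (dotp x v - b)) *: v.

Definition lX (X : set V) (v : V) : R :=
  inf [set a : R | forall c, a <= c -> refl v c @` halfplus X v c `<=` X].

Definition closed_segment (x y : V) : set V :=
  [set (1 - t) *: x + t *: y | t in `[0, 1]%classic].
End Defs.

From HB Require Import structures.
From mathcomp Require Import all_boot all_order all_algebra.
From mathcomp Require Import all_classical all_reals all_analysis.
From mathcomp Require Import ring lra.
Set Implicit Arguments. Unset Strict Implicit. Unset Printing Implicit Defensive.
Import Order.TTheory GRing.Theory Num.Theory.
Import numFieldNormedType.Exports.
Local Open Scope classical_set_scope.
Local Open Scope ring_scope.

(* The point of [z, R_l z] with parameter s is R_c z for the hyperplane level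
   c = z.v - s (z.v - l), which lies in [l, z.v).  For every c >= l the reflection
   R_c maps the part of Omega above the hyperplane into Omega: for c > l this is
   the definition of the infimum l, and for c = l it follows by letting c decrease
   to l, since Omega is closed.  Finally this folding property passes from Omega to
   its convex hull, because the points of the hull that are either below the
   hyperplane or reflected into the hull form a convex set containing Omega. *)

Section Reflection.
Variables (R : realType) (n : nat).
Notation V := 'rV[R]_n.
Implicit Types (x y z v : V) (O H : set V).

Lemma dotpD x y v : dotp (x + y) v = dotp x v + dotp y v.
Proof. by rewrite /dotp -big_split; apply: eq_bigr => i _; rewrite !mxE mulrDl. Qed.

Lemma dotpZ (a : R) x v : dotp (a *: x) v = a * dotp x v.
Proof. by rewrite /dotp mulr_sumr; apply: eq_bigr => i _; rewrite !mxE mulrA. Qed.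

Lemma dotp_comb (t : R) x y v :
  dotp (t *: x + (1 - t) *: y) v = t * dotp x v + (1 - t) * dotp y v.
Proof. by rewrite dotpD !dotpZ. Qed.

Lemma refl_comb v (c t : R) x y :
  refl v c (t *: x + (1 - t) *: y) = t *: refl v c x + (1 - t) *: refl v c y.
Proof. by rewrite /refl dotp_comb; apply/rowP => j; rewrite !mxE; ring. Qed.

Lemma reflB v (c c' : R) x : refl v c x - refl v c' x = (2 * (c - c')) *: v.
Proof. by apply/rowP => j; rewrite !mxE; ring. Qed.

Lemma comb_refl v (l s : R) z :
  (1 - s) *: z + s *: refl v l z = refl v (dotp z v - s * (dotp z v - l)) z.
Proof. by apply/rowP => j; rewrite !mxE; ring. Qed.

Lemma convex_hull_convex O : is_convex_set (convex_hull O).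
Proof. by move=> x y t Hx Hy t0 t1 C cC OC; apply: (cC) => //; [apply: Hx | apply: Hy]. Qed.

Lemma sub_convex_hull O : O `<=` convex_hull O.
Proof. by move=> x Ox C _ OC; apply: OC. Qed.

(* Writing a = z1.v - c > 0 and b = z2.v - c <= 0, the reflection of the
   combination is the same combination of z2 with the point of [z1, R_c z1]
   at parameter q = (t a + (1 - t) b) / (t a), and 0 <= q <= 1. *)
Lemma convex_refl_comb H v (c t : R) z1 z2 : is_convex_set H ->
  H z1 -> H (refl v c z1) -> H z2 -> c < dotp z1 v -> dotp z2 v <= c ->
  0 <= t -> t <= 1 -> c < dotp (t *: z1 + (1 - t) *: z2) v ->
  H (refl v c (t *: z1 + (1 - t) *: z2)).
Proof.
move=> cH H1 Hr1 H2 c1 c2 t0 t1; rewrite dotp_comb => cz.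
set a := dotp z1 v - c; set b := dotp z2 v - c.
have t_gt0 : 0 < t.
  by rewrite lt_neqAle t0 andbT eq_sym; apply/eqP => t_eq0; move: cz; rewrite t_eq0; lra.
have ta0 : 0 < t * a by rewrite mulr_gt0 // subr_gt0.
set q := (t * a + (1 - t) * b) / (t * a).
have q0 : 0 <= q by rewrite divr_ge0 ?(ltW ta0) // /a /b; nra.
have q1 : q <= 1.
  rewrite ler_pdivrMr // mul1r -[leRHS]addr0 lerD2l.
  by apply: mulr_ge0_le0; rewrite /b; lra.
have tqa : t * q * a = t * a + (1 - t) * b.
  by rewrite mulrAC mulrC divfK ?gt_eqF.
have -> : refl v c (t *: z1 + (1 - t) *: z2)
          = t *: (q *: refl v c z1 + (1 - q) *: z1) + (1 - t) *: z2.
  apply/rowP => j; rewrite /refl dotp_comb !mxE.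
  have -> : t * dotp z1 v + (1 - t) * dotp z2 v - c = t * q * a by rewrite tqa /a /b; ring.
  by rewrite /a; ring.
by apply: (cH) => //; apply: (cH).
Qed.

Lemma refl_halfplus_convex_hull O v (c : R) :
  refl v c @` halfplus O v c `<=` O ->
  refl v c @` halfplus (convex_hull O) v c `<=` convex_hull O.
Proof.
move=> hO _ [z [Hz cz] <-].
pose S := [set z | convex_hull O z /\ (c < dotp z v -> convex_hull O (refl v c z))].
have cS : is_convex_set S.
  move=> x y t [Hx rx] [Hy ry] t0 t1; split; first exact: convex_hull_convex.
  have hullC := @convex_hull_convex O.
  case: (ltP c (dotp x v)) => cx; case: (ltP c (dotp y v)) => cy cxy.
  - by rewrite refl_comb; apply: hullC => //; [apply: rx | apply: ry].
  - by apply: convex_refl_comb => //; apply: rx.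
  - rewrite -[t in t *: x](subKr 1) addrC in cxy *.
    by apply: convex_refl_comb => //; [apply: ry | lra | lra].
  - by move: cxy; rewrite dotp_comb; nra.
have OS : O `<=` S.
  move=> x Ox; split; first exact: sub_convex_hull.
  by move=> cx; apply: sub_convex_hull; apply: hO; exists x.
by case: (Hz S cS OS) => _; apply.
Qed.

Lemma compact_dotp_bounded O v : compact O -> exists K, forall y, O y -> `|dotp y v| <= K.
Proof.
case/compact_bounded => M [_ /(_ (`|M| + 1)) OM].
have {}OM : forall y, O y -> `|y| <= `|M| + 1.
  by apply: OM; apply: le_lt_trans (ler_norm _) _; rewrite ltrDl.
exists ((`|M| + 1) * \sum_(i < n) `|v 0 i|) => y /OM yM.
rewrite /dotp mulr_sumr; apply: le_trans (ler_norm_sum _ _ _) _.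
apply: ler_sum => i _; rewrite normrM ler_wpM2r //; apply: le_trans yM.
by rewrite [`|y|]mx_normrE (le_bigmax _ (fun ij : 'I_1 * 'I_n => `|y ij.1 ij.2|) (0, i)).
Qed.

Lemma refl_halfplus_gt_lX O v (c : R) : compact O -> lX O v < c ->
  refl v c @` halfplus O v c `<=` O.
Proof.
move=> cO lc; have [K OK] := compact_dotp_bounded v cO.
set A := [set a : R | forall c, a <= c -> refl v c @` halfplus O v c `<=` O].
have AK : A K.
  move=> c' Kc' _ [w [Ow /= cw] <-]; exfalso; have := OK w Ow.
  by rewrite ler_norml => /andP[_]; lra.
(* [inf_lt] only needs [A] nonempty, so this also covers an [A] unbounded below,
   where [inf A] is a junk value. *)
have [a Aa ac] : exists2 a, A a & a < c by apply: inf_lt => //; exists K.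
exact: Aa (ltW ac).
Qed.

Lemma refl_halfplus_lX O v : compact O -> refl v (lX O v) @` halfplus O v (lX O v) `<=` O.
Proof.
move=> cO _ [y [Oy ly] <-]; move: ly => /=; set l := lX O v => ly.
apply: (compact_closed (@norm_hausdorff _ _) cO) => B /nbhs_ballP[e /= e0 eB].
have v1 : 0 < `|v| + 1 by rewrite ltr_wpDl.
set d := Num.min ((dotp y v - l) / 2) (e / (2 * (`|v| + 1))).
have d0 : 0 < d by rewrite lt_min !divr_gt0 ?mulr_gt0 ?subr_gt0.
have dy : d <= (dotp y v - l) / 2 by rewrite ge_min lexx.
have de : d * (2 * (`|v| + 1)) <= e by rewrite -ler_pdivlMr ?mulr_gt0 // ge_min lexx orbT.
exists (refl v (l + d) y); split.
  have ld : l < l + d by rewrite ltrDl.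
  by apply: (refl_halfplus_gt_lX cO ld); exists y; split => //=; lra.
apply: eB; rewrite -ball_normE /ball_ /= reflB normrZ.
by rewrite (_ : l - (l + d) = - d); [rewrite mulrN normrN gtr0_norm ?mulr_gt0 //; nra | ring].
Qed.

Lemma refl_halfplus_ge_lX O v (c : R) : compact O -> lX O v <= c ->
  refl v c @` halfplus O v c `<=` O.
Proof.
move=> cO; rewrite le_eqVlt => /orP[/eqP <-|]; first exact: refl_halfplus_lX.
exact: refl_halfplus_gt_lX.
Qed.

End Reflection.

Theorem lemma2p2 (R : realType) (n : nat) (Omega : set 'rV[R]_n) (v : 'rV[R]_n) :
  (2 <= n)%N -> compact Omega -> unit_sphere v ->
  forall z, halfplus (convex_hull Omega) v (lX Omega v) z ->
    closed_segment z (refl v (lX Omega v) z) `<=` convex_hull Omega.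
Proof.
move=> _ cO _ z [Hz lz] p [s]; rewrite /= in_itv /= => /andP[s0 s1] <-{p}.
move: lz => /=; set l := lX Omega v => lz.
have [<-|s_gt0] := eqVneq 0 s; first by rewrite subr0 scale1r scale0r addr0.
have {}s_gt0 : 0 < s by rewrite lt_neqAle s_gt0.
have above : 0 < s * (dotp z v - l) by rewrite mulr_gt0 // subr_gt0.
have below : s * (dotp z v - l) <= dotp z v - l by rewrite ler_piMl // subr_ge0 ltW.
rewrite comb_refl; set c := dotp z v - _.
apply: (refl_halfplus_convex_hull (v := v) (c := c)).
  by apply: refl_halfplus_ge_lX => //; rewrite /c; lra.
by exists z; split => //=; rewrite /c; lra.
Qed.
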